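(* Let $p$ be a prime with $p\equiv 1\pmod 3$, and let $$D_p(1,1)=\det\left[(i^2+ij+j^2)^{p-2}\right]_{1\le i,j\le p-1}.$$ Then the Legendre symbol satisfies $$\left(\frac{D_p(1,1)}{p}\right)=\begin{cases}0 & \text{if } p\equiv 7\pmod 9,\\ 1 & \text{otherwise.}\end{cases}$$
   Context: $\left(\frac{\cdot}{p}\right)$ denotes the Legendre symbol modulo $p$. The determinant is of the $(p-1)\times(p-1)$ integer matrix whose $(i,j)$ entry is $(i^2+ij+j^2)^{p-2}$. *)

From mathcomp Require Import all_boot all_order all_algebra.
Set Implicit Arguments. Unset Strict Implicit. Unset Printing Implicit Defensive.
Import Order.TTheory GRing.Theory Num.Theory.
Local Open Scope ring_scope.

Definition legendre (a : int) (p : nat) : int :=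
  if (p%:Z %| a)%Z then 0
  else if [exists x : 'I_p, ((x%:Z) ^+ 2 == a %[mod p%:Z])%Z] then 1 else -1.

Definition Dp11 (p : nat) : int :=
  \det (\matrix_(i < p.-1, j < p.-1)
          ((((i.+1) ^ 2 + i.+1 * j.+1 + (j.+1) ^ 2)%N)%:Z ^+ (p - 2)%N)).

(* Write p = 3q + 1.  For s^(3q) = 1 the value 1 / (1 + s + s^2) (read as 0 at
   the primitive cube roots of unity) is G(s) = sum_f d_f s^f, where
   d_(3j) = 3j+q+2, d_(3j+1) = -(3j+2q+3), d_(3j+2) = q: multiplying G by
   1 - s^3 telescopes.  Hence (x^2+xy+y^2)^(p-2) = x^-2 G(y/x) on F_p^*, so the
   matrix is U^T diag(d) V with V the Vandermonde matrix of 1, ..., p-1 and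
   U^T V = diag(-x^-2) by the geometric sums over F_p^*.  Since p - 1 and q are
   even and d_(3j+1) = -d_(3(q-1-j)), the determinant is the square of
   prod x^-1 * prod_(j<q) (3j+q+2) * q^(q/2) in F_p, which vanishes exactly when
   p divides some 3j+q+2, i.e. when p = 7 mod 9. *)

From mathcomp Require Import all_boot all_algebra finfield ring zify.
Set Implicit Arguments. Unset Strict Implicit. Unset Printing Implicit Defensive.
Import GRing.Theory.
Local Open Scope ring_scope.

Lemma big_ord_triples (R : Type) (idx : R) (op : Monoid.law idx)
    (n : nat) (h : nat -> R) :
  \big[op/idx]_(f < 3 * n) h f =
  \big[op/idx]_(j < n) op (op (h (3 * j)%N) (h (3 * j).+1)) (h (3 * j).+2).
Proof.
elim: n => [|n IHn]; first by rewrite muln0 !big_ord0.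
rewrite [RHS]big_ord_recr /= -IHn mulnS -!(big_mkord xpredT).
rewrite (@big_cat_nat _ _ _ (3 * n)) //=; last by lia.
congr (op _ _).
rewrite !big_nat_recl ?big_geq //; last lia.
by rewrite Monoid.mulm1 !Monoid.mulmA.
Qed.

Lemma arith_geom_telescope (R : comPzRingType) (a b u : R) (n : nat) :
  (1 - u) * \sum_(j < n) u ^+ j * (a + j%:R * b) =
  a - u ^+ n * (a + n%:R * b) + b * \sum_(j < n) u ^+ j.+1.
Proof.
elim: n => [|n IHn]; first by rewrite !big_ord0 expr0; ring.
rewrite !big_ord_recr /= mulrDr IHn !exprS -addn1 natrD; ring.
Qed.

Lemma sum_2_3j_even (n : nat) : ~~ odd n ->
  (\sum_(j < n) (2 + 3 * j) = n./2 * (3 * n + 1))%N.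
Proof.
have double_sum : (2 * \sum_(j < n) (2 + 3 * j) = n * (3 * n + 1))%N.
  by elim: n => [|n IHn]; rewrite ?big_ord0 // big_ord_recr /= mulnDr IHn; lia.
move=> n_even; have := odd_double_half n; rewrite (negbTE n_even) add0n -muln2.
lia.
Qed.

Section Phi3Inverse.
Variables (F : fieldType) (q : nat).
Hypothesis char_3q1 : ((3 * q).+1)%N%:R = 0 :> F.

Definition phi3inv_coef (f : nat) : F :=
  let j := (f %/ 3)%N in
  match (f %% 3)%N with
  | 0 => (3 * j + q + 2)%N%:R
  | 1 => - (3 * j + 2 * q + 3)%N%:R
  | _ => q%:R
  end.

Definition phi3inv (s : F) : F := \sum_(f < 3 * q) phi3inv_coef f * s ^+ f.

Lemma phi3inv_coef0 j : phi3inv_coef (3 * j) = (3 * j + q + 2)%N%:R.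
Proof.
rewrite /phi3inv_coef; have -> : ((3 * j) %% 3 = 0)%N by lia.
by have -> : ((3 * j) %/ 3 = j)%N by lia.
Qed.

Lemma phi3inv_coef1 j : phi3inv_coef (3 * j).+1 = - (3 * j + 2 * q + 3)%N%:R.
Proof.
rewrite /phi3inv_coef; have -> : ((3 * j).+1 %% 3 = 1)%N by lia.
by have -> : ((3 * j).+1 %/ 3 = j)%N by lia.
Qed.

Lemma phi3inv_coef2 j : phi3inv_coef (3 * j).+2 = q%:R.
Proof. by rewrite /phi3inv_coef; have -> : ((3 * j).+2 %% 3 = 2)%N by lia. Qed.

Lemma mul3_q : 3 * q%:R = -1 :> F.
Proof.
apply/(addIr 1); rewrite addNr -char_3q1.
by rewrite -[(3 * q).+1]addn1 natrD natrM.
Qed.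

Lemma phi3inv_triples s : phi3inv s = \sum_(j < q) (s ^+ 3) ^+ j *
  ((q + 2)%N%:R - (2 * q + 3)%N%:R * s + q%:R * s ^+ 2 + j%:R * (3 * (1 - s))).
Proof.
rewrite /phi3inv (big_ord_triples _ q (fun f => phi3inv_coef f * s ^+ f)).
apply: eq_bigr => j _ /=; rewrite phi3inv_coef0 phi3inv_coef1 phi3inv_coef2.
rewrite -exprM !exprSr; ring.
Qed.

Lemma mul_phi3inv s : s ^+ (3 * q) = 1 -> 1 + s + s ^+ 2 != 0 ->
  (1 + s + s ^+ 2) * phi3inv s = 1.
Proof.
move=> s3q1 phi3_neq0; rewrite phi3inv_triples -[RHS]opprK -mul3_q.
have [->|s_neq1] := eqVneq s 1.
  under eq_bigr => j _ do rewrite !expr1n mul1r subrr !mulr0 addr0.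
  by rewrite sumr_const card_ord -mulr_natr; ring.
set a := (_ - _ + _); set b := 3 * (1 - s).
have cube_diff : 1 - s ^+ 3 = (1 - s) * (1 + s + s ^+ 2) by ring.
have s_neq1' : 1 - s != 0 by rewrite subr_eq0 eq_sym.
have s3_neq1 : s ^+ 3 != 1 by rewrite eq_sym -subr_eq0 cube_diff mulf_neq0.
have s3q : (s ^+ 3) ^+ q = 1 by rewrite -exprM.
have geom0 : \sum_(j < q) (s ^+ 3) ^+ j = 0.
  have := subrX1 (s ^+ 3) q; rewrite s3q subrr => /esym/eqP.
  by rewrite mulf_eq0 subr_eq0 (negbTE s3_neq1) => /eqP.
have := arith_geom_telescope a b (s ^+ 3) q.
under [in X in _ = X -> _]eq_bigr => j _ do rewrite exprS.
rewrite -mulr_sumr geom0 !mulr0 addr0 s3q mul1r cube_diff -mulrA.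
have -> : a - (a + q%:R * b) = (1 - s) * - (3 * q%:R) by rewrite /b; ring.
exact: mulfI.
Qed.

Lemma phi3inv_root s : ~~ odd q -> 1 + s + s ^+ 2 = 0 -> phi3inv s = 0.
Proof.
move=> q_even phi3_0.
have s3 : s ^+ 3 = 1.
  have : (1 - s) * (1 + s + s ^+ 2) = 1 - s ^+ 3 by ring.
  by rewrite phi3_0 mulr0 => /esym/eqP; rewrite subr_eq0 eq_sym => /eqP.
have triple_eq (j : nat) :
    (q + 2)%N%:R - (2 * q + 3)%N%:R * s + q%:R * s ^+ 2 + j%:R * (3 * (1 - s)) =
    (1 - s) * (2 + 3 * j%:R).
  apply/eqP; rewrite -subr_eq0.
  have -> : (q + 2)%N%:R - (2 * q + 3)%N%:R * s + q%:R * s ^+ 2 +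
      j%:R * (3 * (1 - s)) - (1 - s) * (2 + 3 * j%:R) =
      - s * (3 * q%:R + 1) + q%:R * (1 + s + s ^+ 2) by ring.
  by rewrite mul3_q phi3_0 addNr !mulr0 addr0.
rewrite phi3inv_triples s3.
under eq_bigr => j _ do rewrite expr1n mul1r triple_eq.
rewrite -mulr_sumr (_ : \sum_(j < q) _ = (\sum_(j < q) (2 + 3 * j))%N%:R).
  by rewrite sum_2_3j_even // natrM addn1 char_3q1 !mulr0.
by rewrite natr_sum; apply: eq_bigr => j _; rewrite natrD natrM.
Qed.

Lemma prod_phi3inv_coef :
  \prod_(f < 3 * q) phi3inv_coef f =
  (\prod_(j < q) (3 * j + q + 2)%N%:R) ^+ 2 * q%:R ^+ q.
Proof.
rewrite (big_ord_triples _ q phi3inv_coef).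
under eq_bigr => j _ do rewrite phi3inv_coef0 phi3inv_coef1 phi3inv_coef2.
rewrite !big_split /= prodr_const card_ord expr2; congr (_ * _ * _).
rewrite [LHS](reindex_inj rev_ord_inj); apply: eq_bigr => j _ /=.
have jq := ltn_ord j.
have -> : (3 * (q - j.+1) + 2 * q + 3 = 2 * (3 * q).+1 - (3 * j + q + 2))%N by lia.
by rewrite natrB ?natrM ?char_3q1 ?mulr0 ?sub0r ?opprK //; lia.
Qed.

End Phi3Inverse.

Section PrimeField.
Variable p : nat.
Hypothesis p_prime : prime p.

Lemma Fp_nat_eq0 k : ((k%:R : 'F_p) == 0) = (p %| k)%N.
Proof. by rewrite (dvdn_pcharf (pchar_Fp p_prime)). Qed.

Lemma Fp_int_eq0 (z : int) : ((z%:~R : 'F_p) == 0) = (p%:Z %| z)%Z.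
Proof.
case: z => k; first by rewrite dvdzE /= -Fp_nat_eq0.
by rewrite NegzE mulrNz oppr_eq0 dvdzE abszN /= -Fp_nat_eq0.
Qed.

Lemma Fp_fermat (x : 'F_p) : x != 0 -> x ^+ p.-1 = 1.
Proof.
move=> x_neq0; apply: (mulfI x_neq0); rewrite -exprS prednK ?prime_gt0 // mulr1.
by have := expf_card x; rewrite card_Fp.
Qed.

Lemma sum_Fp_expr (r : 'F_p) : r != 0 ->
  \sum_(f < p.-1) r ^+ f = if r == 1 then -1 else 0.
Proof.
move=> r_neq0; have [->|r_neq1] := eqVneq r 1.
  under eq_bigr => f _ do rewrite expr1n.
  rewrite sumr_const card_ord; apply: (addIr 1); rewrite addNr -mulrSr.
  by rewrite prednK ?prime_gt0 // pchar_Fp_0.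
have := subrX1 r p.-1; rewrite Fp_fermat // subrr => /esym/eqP.
by rewrite mulf_eq0 subr_eq0 (negbTE r_neq1) => /eqP.
Qed.

Lemma legendre_square (z : int) (x : 'F_p) : z%:~R = x ^+ 2 ->
  legendre z p = if x == 0 then 0 else 1.
Proof.
move=> z_sq; rewrite /legendre -Fp_int_eq0 z_sq expf_eq0 /=.
case: eqP => // _; case: existsP => // -[]; have x_lt_p : (val x < p)%N.
  by rewrite -[X in (_ < X)%N](card_Fp p_prime) card_ord ltn_ord.
exists (Ordinal x_lt_p).
rewrite eqz_mod_dvd -Fp_int_eq0 rmorphB rmorphXn /= z_sq.
by rewrite (_ : (Posz (val x))%:~R = x) ?subrr // -[RHS](natr_Zp x).
Qed.

Lemma Fp_expr_predn2 (x : 'F_p) : x != 0 -> x ^+ (p - 2) = x^-1.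
Proof.
move=> x_neq0; apply: (mulIf x_neq0); rewrite -exprSr mulVf //.
by rewrite (_ : (p - 2).+1 = p.-1) ?Fp_fermat //; have := prime_gt1 p_prime; lia.
Qed.

End PrimeField.

Section DeterminantModP.
Variable p : nat.
Hypotheses (p_prime : prime p) (p_mod3 : (p %% 3 = 1)%N).
Local Notation q := (p %/ 3)%N.
Local Notation n := p.-1.

Lemma predp_3q : p.-1 = (3 * q)%N.
Proof. by rewrite {1}(divn_eq p 3) p_mod3 addn1 mulnC. Qed.

Lemma q_even : ~~ odd q.
Proof.
have [p2|p_odd] := even_prime p_prime; first by move: p_mod3; rewrite p2.
by move: p_odd p_mod3; lia.
Qed.

Lemma q_gt0 : (0 < q)%N.
Proof. by have := prime_gt1 p_prime; move: p_mod3; lia. Qed.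

Lemma char_Fp_3q1 : ((3 * q).+1)%N%:R = 0 :> 'F_p.
Proof. by rewrite -predp_3q prednK ?prime_gt0 // pchar_Fp_0. Qed.

Lemma phi3_expr_predn2 (s : 'F_p) : s != 0 ->
  (1 + s + s ^+ 2) ^+ (p - 2) = \sum_(f < n) phi3inv_coef 'F_p q f * s ^+ f.
Proof.
move=> s_neq0; rewrite predp_3q -/(phi3inv q s).
have [phi3_0|phi3_neq0] := eqVneq (1 + s + s ^+ 2) 0.
  rewrite phi3_0 (phi3inv_root char_Fp_3q1) ?q_even ?expr0n //.
  by rewrite (_ : p - 2 = (p - 3).+1)%N //; have := q_gt0; lia.
rewrite (Fp_expr_predn2 p_prime) //; apply: (mulfI phi3_neq0); rewrite mulfV //.
by rewrite (mul_phi3inv char_Fp_3q1) // -predp_3q Fp_fermat.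
Qed.

Definition nzFp (i : 'I_n) : 'F_p := i.+1%:R.

Lemma nzFp_neq0 i : nzFp i != 0.
Proof.
rewrite Fp_nat_eq0 //; apply/negP => /(dvdn_leq (ltn0Sn _)).
by have := ltn_ord i; have := prime_gt1 p_prime; lia.
Qed.

Lemma nzFp_inj : injective nzFp.
Proof.
move=> i j; wlog le_ij : i j / (i <= j)%N.
  by move=> wlog_ij; case: (leqP i j) => [|/ltnW] /wlog_ij // + /esym => /[apply].
move=> /eqP; rewrite eq_sym -subr_eq0 -natrB // Fp_nat_eq0 //.
have [ij0 _|ij_gt0 /(dvdn_leq ij_gt0)] := posnP (j.+1 - i.+1).
  by apply/val_inj => /=; lia.
by have := ltn_ord j; have := prime_gt1 p_prime; lia.
Qed.

Definition Dmat : 'M['F_p]_n :=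
  \matrix_(i, j) (nzFp i ^+ 2 + nzFp i * nzFp j + nzFp j ^+ 2) ^+ (p - 2).

Definition inv_vdm : 'M['F_p]_n := \matrix_(f, i) (nzFp i)^-1 ^+ (f + 2).

Definition vdm : 'M['F_p]_n := Vandermonde n (\row_j nzFp j).

Lemma Dmat_factor :
  Dmat = inv_vdm^T *m diag_mx (\row_f phi3inv_coef 'F_p q f) *m vdm.
Proof.
apply/matrixP => i j; rewrite mul_mx_diag !mxE.
set x := nzFp i; set y := nzFp j; have x_neq0 : x != 0 := nzFp_neq0 i.
have -> : x ^+ 2 + x * y + y ^+ 2 = x ^+ 2 * (1 + y / x + (y / x) ^+ 2).
  by move: x_neq0; clearbody x y => x_neq0; field.
rewrite exprMn (Fp_expr_predn2 p_prime) ?expf_neq0 //.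
rewrite phi3_expr_predn2 ?mulf_neq0 ?invr_eq0 ?nzFp_neq0 // mulr_sumr.
by apply: eq_bigr => f _; rewrite !mxE exprMn exprD -exprVn; ring.
Qed.

Lemma inv_vdm_mul_vdm : inv_vdm^T *m vdm = diag_mx (\row_i - (nzFp i)^-1 ^+ 2).
Proof.
apply/matrixP => i j; rewrite !mxE.
under eq_bigr => f _ do rewrite !mxE exprD mulrAC -exprMn [_ * nzFp j]mulrC.
rewrite -mulr_suml sum_Fp_expr ?mulf_neq0 ?invr_eq0 ?nzFp_neq0 //.
have -> : (nzFp j / nzFp i == 1) = (i == j).
  apply/eqP/eqP => [|->]; last by rewrite mulfV ?nzFp_neq0.
  by move/divr1_eq/nzFp_inj ->.
by case: eqP => _; rewrite ?mulr1n ?mulr0n ?mul0r // mulN1r.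
Qed.

Definition det_root : 'F_p :=
  \prod_(i < n) (nzFp i)^-1 * \prod_(j < q) (3 * j + q + 2)%N%:R * q%:R ^+ q./2.

Lemma det_Dmat : \det Dmat = det_root ^+ 2.
Proof.
rewrite Dmat_factor !det_mulmx mulrAC -det_mulmx inv_vdm_mul_vdm !det_diag.
under eq_bigr => i _ do rewrite mxE.
under [X in _ * X]eq_bigr => f _ do rewrite mxE.
have -> : \prod_(f < n) phi3inv_coef 'F_p q f = \prod_(f < 3 * q) phi3inv_coef 'F_p q f.
  by rewrite predp_3q.
rewrite prodrN card_ord [in (-1) ^+ _]predp_3q -signr_odd oddM /= (negbTE q_even) mul1r.
rewrite prodrXl (prod_phi3inv_coef char_Fp_3q1) /det_root.
have q_half : (q./2 * 2)%N = q.
  by have := odd_double_half q; rewrite (negbTE q_even) add0n -muln2.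
have -> : q%:R ^+ q = (q%:R ^+ q./2) ^+ 2 :> 'F_p by rewrite -exprM q_half.
by rewrite !exprMn; ring.
Qed.

Lemma exists_dvdn_3j_q2 : (exists j : 'I_q, (p %| 3 * j + q + 2)%N) <-> (p %% 9 == 7)%N.
Proof.
have p_gt1 := prime_gt1 p_prime.
have p_3q1 : p = (3 * q).+1 by rewrite -predp_3q prednK ?prime_gt0.
split.
  move=> [j /dvdnP [k dvd_k]]; have j_lt_q := ltn_ord j.
  have : (k * p < 2 * p)%N by lia.
  by rewrite ltn_pmul2r ?prime_gt0 //; case: k dvd_k => [|[|]] //=; lia.
move=> p_mod9; have j_lt_q : ((2 * q - 1) %/ 3 < q)%N by lia.
exists (Ordinal j_lt_q) => /=.
by have -> : (3 * ((2 * q - 1) %/ 3) + q + 2)%N = p by lia.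
Qed.

Lemma det_root_eq0 : (det_root == 0) = (p %% 9 == 7)%N.
Proof.
have inv_neq0 : \prod_(i < n) (nzFp i)^-1 != 0.
  by apply/prodf_neq0 => i _; rewrite invr_eq0 nzFp_neq0.
have q_neq0 : q%:R ^+ q./2 != 0 :> 'F_p.
  rewrite expf_neq0 // Fp_nat_eq0 //; apply/negP => /(dvdn_leq q_gt0).
  by have := prime_gt1 p_prime; lia.
rewrite /det_root !mulf_eq0 (negbTE inv_neq0) (negbTE q_neq0) orbF /=.
apply/prodf_eq0/idP => [[j _]|/exists_dvdn_3j_q2 [j dvd_j]].
  by rewrite Fp_nat_eq0 // => dvd_j; apply/exists_dvdn_3j_q2; exists j.
by exists j; rewrite ?Fp_nat_eq0.
Qed.

Lemma Dp11_Fp : (Dp11 p)%:~R = \det Dmat.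
Proof.
rewrite /Dp11 -det_map_mx; congr (\det _); apply/matrixP => i j.
by rewrite !mxE rmorphXn /= -pmulrn; congr (_ ^+ _); ring.
Qed.

End DeterminantModP.

Theorem theorem1p1 (p : nat) (hp : prime p) (hp3 : (p %% 3 = 1)%N) :
  legendre (Dp11 p) p = (if (p %% 9 == 7)%N then 0%R else 1%R).
Proof.
have Dp11_sq : (Dp11 p)%:~R = det_root p ^+ 2 by rewrite Dp11_Fp // det_Dmat.
by rewrite (legendre_square hp Dp11_sq) det_root_eq0.
Qed.
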